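(* Let $\Sigma$ be a finite nonempty set of $d\times d$ real matrices with nonnegative entries. For each $i\in\{1,\dots,d\}$ let \[ \delta_i=\gcd\{n\ge1:\ \|\Sigma^n\|_{i,i}>0\}, \] with $\delta_i=1$ if this set is empty. Let $\Delta$ be a positive integer that is a multiple of every $\delta_i$. Then \[ \rho(\Sigma)=\lim_{m\to\infty}\max_i\sqrt[m\Delta]{\|\Sigma^{m\Delta}\|_{i,i}}=\lim_{m\to\infty}\max_{A_1,\dots,A_{m\Delta}\in\Sigma}\sqrt[m\Delta]{\operatorname{tr}(A_1\cdots A_{m\Delta})}. \]
   Context: For $n\ge1$, $\|\Sigma^n\|_{i,j}=\max_{A_1,\dots,A_n\in\Sigma}(A_1\cdots A_n)_{i,j}$. The joint spectral radius is $\rho(\Sigma)=\lim_{n\to\infty}\sqrt[n]{\max_{A_1,\dots,A_n\in\Sigma}\|A_1\cdots A_n\|}$ for any matrix norm (the limit exists and is independent of the norm). $\operatorname{tr}$ denotes the trace. *)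

From HB Require Import structures.
From mathcomp Require Import all_boot all_order all_algebra.
From mathcomp Require Import all_classical all_reals all_analysis.
Set Implicit Arguments. Unset Strict Implicit. Unset Printing Implicit Defensive.
Import Order.TTheory GRing.Theory Num.Theory.
Import numFieldNormedType.Exports.
Local Open Scope ring_scope.
Local Open Scope classical_set_scope.

Fixpoint prods (R : realType) (d : nat) (Sig : seq 'M[R]_d) (n : nat)
  : seq 'M[R]_d :=
  match n with
  | 0 => [:: 1%:M]
  | n'.+1 => [seq A *m B | A <- Sig, B <- prods Sig n']
  end.

(* ||Sigma^n||_{i,j} = max over products of length n of the (i,j) entry.
   (Entries are nonnegative in the theorem, so the base value 0 is harmless.) *)
Definition jent (R : realType) (d : nat) (Sig : seq 'M[R]_d) (n : nat)
  (i j : 'I_d) : R :=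
  \big[Num.max/0]_(P <- prods Sig n) P i j.

Definition jtr (R : realType) (d : nat) (Sig : seq 'M[R]_d) (n : nat) : R :=
  \big[Num.max/0]_(P <- prods Sig n) \tr P.

(* max over products of length n of the matrix norm (MathComp-Analysis'
   sup-norm on matrices: max of the absolute values of the entries) *)
Definition jnorm (R : realType) (d : nat) (Sig : seq 'M[R]_d) (n : nat) : R :=
  \big[Num.max/0]_(P <- prods Sig n) `|P|.

Definition jsr (R : realType) (d : nat) (Sig : seq 'M[R]_d) : R :=
  lim ((fun n : nat => jnorm Sig n.+1 `^ (n.+1%:R)^-1) @ \oo).

Definition gcd_of (S : set nat) (g : nat) : Prop :=
  (S = set0 /\ g = 1%N) \/
  (S !=set0 /\ (forall n, S n -> (g %| n)%N) /\
   (forall h, (forall n, S n -> (h %| n)%N) -> (h %| g)%N)).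

Definition is_delta (R : realType) (d : nat) (Sig : seq 'M[R]_d) (i : 'I_d)
  (g : nat) : Prop :=
  gcd_of [set n | (0 < n)%N /\ 0 < jent Sig n i i] g.

(* Let r be the supremum of the roots ||Sigma^n||_{i,i}^(1/n), n >= 1.
   Upper bound: cut a product into L blocks of length b.  Up to a factor d per
   block, an entry of Sigma^(L b) is bounded by the weight of one walk of length
   L whose steps are weighted by the entries of ||Sigma^b||.  Cutting the closed
   sub-walks out of it leaves diagonal entries, at most r^(b length), and at most
   d further steps; choosing b with d s^b <= t^b, r < s < t, shows that
   ||Sigma^n|| = O(t^n) for every t > r.
   Lower bound: for t < r some diagonal entry has ||Sigma^n0||_{i,i} > t^n0, and
   the diagonal is super-multiplicative.  The n with ||Sigma^n||_{i,i} > 0 form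
   an additive submonoid of N whose gcd divides Delta, so it contains every
   large multiple of Delta; these fill the gap between m Delta and a multiple of
   n0, giving ||Sigma^(m Delta)||_{i,i} >= c t^(m Delta).
   Hence the n-th roots of the norms, of the largest diagonal entries at
   multiples of Delta and of the traces all converge to r. *)

From HB Require Import structures.
From mathcomp Require Import all_boot all_order all_algebra.
From mathcomp Require Import all_classical all_reals all_analysis.
From mathcomp Require Import zify ring lra.
Import Order.TTheory GRing.Theory Num.Theory.
Import numFieldNormedType.Exports.
Local Open Scope ring_scope.
Local Open Scope classical_set_scope.
Set Implicit Arguments. Unset Strict Implicit. Unset Printing Implicit Defensive.

Section AdditiveSubmonoid.
Variable p : nat -> Prop.
Hypothesis p0 : p 0%N.
Hypothesis pD : forall a b, p a -> p b -> p (a + b)%N.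

Lemma submonoid_mull k a : p a -> p (k * a)%N.
Proof. by move=> pa; elim: k => [|k IH]; rewrite ?mul0n // mulSn; apply: pD. Qed.

(* The least positive gap [P - Q] between two elements of the submonoid divides
   all of its elements: a remainder modulo that gap is again such a gap. *)
Lemma submonoid_min_gap n0 : (0 < n0)%N -> p n0 ->
  exists g P Q, [/\ (0 < g)%N, p P, p Q & P = Q + g]%N /\
                forall a, p a -> (g %| a)%N.
Proof.
move=> n0_gt0 pn0.
pose gap g := `[< (0 < g)%N /\ exists P Q, [/\ p P, p Q & P = Q + g]%N >].
have gap_n0 : gap n0 by apply/asboolP; split=> //; exists n0, 0%N.
case: (@ex_minnP gap (ex_intro _ n0 gap_n0)) => g /asboolP[g_gt0 [P [Q [pP pQ EP]]]] g_min.
exists g, P, Q; split=> // a pa; rewrite /dvdn -leqn0 leqNgt; apply/negP => r_gt0.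
suff : (g <= a %% g)%N by rewrite leqNgt ltn_mod g_gt0.
apply: g_min; apply/asboolP; split=> //.
exists (a + a %/ g * Q)%N, (a %/ g * P)%N.
split; [exact/pD/submonoid_mull | exact: submonoid_mull |].
by rewrite {1}(divn_eq a g) EP; ring.
Qed.

(* With [m = c q + j], [j < q <= c] and [x = q g]: [m g = (c - j) x + j (x + g)]. *)
Lemma submonoid_large_mull g x : (0 < x)%N -> (g %| x)%N -> p x -> p (x + g)%N ->
  exists N, forall m, (N <= m)%N -> p (m * g)%N.
Proof.
move=> x_gt0 /dvdnP[q Ex] px pxg; subst x; exists (q * q)%N => m le_qq_m.
have q_gt0 : (0 < q)%N by move: x_gt0; rewrite muln_gt0 => /andP[].
have j_le_c : (m %% q <= m %/ q)%N.
  by apply: leq_trans (ltnW (_ : m %% q < q)%N) _; rewrite ?ltn_mod ?leq_divRL.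
have -> : (m * g = (m %/ q - m %% q) * (q * g) + m %% q * (q * g + g))%N.
  by rewrite {1}(divn_eq m q) -{1}(subnK j_le_c); ring.
by apply: pD; apply: submonoid_mull.
Qed.

Lemma submonoid_mulD_eventually Delta n0 : (0 < n0)%N -> p n0 -> (0 < Delta)%N ->
    (forall g, gcd_of [set n | (0 < n)%N /\ p n] g -> (g %| Delta)%N) ->
  exists N, forall m, (N <= m)%N -> p (m * Delta)%N.
Proof.
move=> n0_gt0 pn0 Delta_gt0 gcd_dvd.
have [g [P [Q [[g_gt0 pP pQ EP] g_dvd]]]] := submonoid_min_gap n0_gt0 pn0.
have /dvdnP[u EDelta] : (g %| Delta)%N.
  apply: gcd_dvd; right; split; first by exists n0.
  split=> [n [_ /g_dvd]//|h h_dvd].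
  have h_dvd0 a : p a -> (h %| a)%N by case: a => // a pa; apply: h_dvd.
  by rewrite -(addKn Q g) -EP dvdn_sub ?h_dvd0.
have [N HN] : exists N, forall m, (N <= m)%N -> p (m * g)%N.
  apply: (@submonoid_large_mull g (P + Q)); [lia | by rewrite dvdn_add ?g_dvd | exact: pD |].
  by rewrite -addnA -EP; apply: pD.
have u_gt0 : (0 < u)%N by move: Delta_gt0; rewrite EDelta muln_gt0 => /andP[].
exists N => m le_Nm; rewrite EDelta mulnA; apply: HN.
by apply: leq_trans le_Nm _; rewrite leq_pmulr.
Qed.

End AdditiveSubmonoid.

Section NthRoot.
Variable R : realType.
Implicit Types x b : R.

Definition nthroot n x : R := x `^ n%:R^-1.

Lemma nthroot_ge0 n x : 0 <= nthroot n x.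
Proof. exact: powR_ge0. Qed.

Lemma nthroot0 n : (0 < n)%N -> nthroot n 0 = 0.
Proof. by move=> n_gt0; rewrite /nthroot powR0 // invr_eq0 pnatr_eq0 -lt0n. Qed.

Lemma exprn_nthroot n x : (0 < n)%N -> 0 <= x -> nthroot n x ^+ n = x.
Proof.
move=> n_gt0 x_ge0; rewrite -powR_mulrn ?nthroot_ge0 // -powRrM mulVf ?powRr1 //.
by rewrite pnatr_eq0 -lt0n.
Qed.

Lemma nthroot_le n x b : (0 < n)%N -> 0 <= x -> 0 <= b ->
  (nthroot n x <= b) = (x <= b ^+ n).
Proof.
move=> n_gt0 x_ge0 b_ge0.
by rewrite -{2}(exprn_nthroot n_gt0 x_ge0) ler_pXn2r // nnegrE nthroot_ge0.
Qed.

Lemma nthroot_ge n x b : (0 < n)%N -> 0 <= x -> 0 <= b ->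
  (b <= nthroot n x) = (b ^+ n <= x).
Proof.
move=> n_gt0 x_ge0 b_ge0.
by rewrite -{2}(exprn_nthroot n_gt0 x_ge0) ler_pXn2r // nnegrE nthroot_ge0.
Qed.

Lemma ler_nthroot n x y : (0 < n)%N -> 0 <= x -> x <= y -> nthroot n x <= nthroot n y.
Proof.
move=> n_gt0 x_ge0 le_xy; have y_ge0 := le_trans x_ge0 le_xy.
by rewrite nthroot_ge ?nthroot_ge0 // exprn_nthroot.
Qed.

Lemma geometric_dominated (C t t' : R) : 0 <= t -> t < t' ->
  \forall k \near \oo, C * t ^+ k <= t' ^+ k.
Proof.
move=> t_ge0 lt_tt'; have t'_gt0 : 0 < t' := le_lt_trans t_ge0 lt_tt'.
have q_ge0 : 0 <= t / t' := divr_ge0 t_ge0 (ltW t'_gt0).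
have q_lt1 : `|t / t'| < 1 by rewrite ger0_norm // ltr_pdivrMr // mul1r.
have eps_gt0 : 0 < (`|C| + 1)^-1 by rewrite invr_gt0 ltr_wpDl.
near=> k.
have : `|(t / t') ^+ k| < (`|C| + 1)^-1.
  by near: k; exact: cvgr0_norm_lt (cvg_expr q_lt1) _ eps_gt0.
rewrite ger0_norm ?exprn_ge0 // exprMn exprVn ltr_pdivrMr ?exprn_gt0 //.
rewrite mulrC ltr_pdivlMr ?ltr_wpDl // => lt_t.
apply: le_trans (ltW lt_t); rewrite mulrC ler_wpM2l ?exprn_ge0 //.
by rewrite (le_trans (ler_norm C)) ?lerDl.
Unshelve. all: by end_near.
Qed.

Lemma nthroot_cvg (u : nat -> R) (n : nat -> nat) (s : R) :
  (forall m, 0 < n m)%N -> (forall m, m <= n m)%N -> (forall m, 0 <= u m) -> 0 <= s ->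
  (forall t, s < t -> exists C, \forall m \near \oo, u m <= C * t ^+ n m) ->
  (forall t, 0 < t -> t < s ->
     exists2 c, 0 < c & \forall m \near \oo, c * t ^+ n m <= u m) ->
  nthroot (n m) (u m) @[m --> \oo] --> s.
Proof.
move=> n_gt0 n_ge u_ge0 s_ge0 upper lower.
have near_n (P : nat -> Prop) :
    (\forall k \near \oo, P k) -> \forall m \near \oo, P (n m).
  by move=> [N _ HN]; exists N => // m /= le_Nm; apply/HN/(leq_trans le_Nm).
apply/cvgrPdist_le => e e_gt0.
have lower_e : \forall m \near \oo, s - e <= nthroot (n m) (u m).
  have [le_se|lt_se] := lerP (s - e) 0.
    by apply: nearW => m; apply: le_trans le_se (nthroot_ge0 _ _).
  have [c c_gt0 lower_c] : exists2 c, 0 < c &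
      \forall m \near \oo, c * (s - e / 2) ^+ n m <= u m by apply: lower; lra.
  have lt_se' : s - e < s - e / 2 by lra.
  have dom := near_n _ (geometric_dominated c^-1 (ltW lt_se) lt_se').
  apply: filterS2 dom lower_c => m dom_m lower_m.
  rewrite nthroot_ge ?u_ge0 ?(ltW lt_se) //; apply: le_trans lower_m.
  by rewrite -ler_pdivrMl.
have upper_e : \forall m \near \oo, nthroot (n m) (u m) <= s + e.
  have [C upper_C] : exists C, \forall m \near \oo, u m <= C * (s + e / 2) ^+ n m.
    by apply: upper; lra.
  have [se_ge0 lt_se] : 0 <= s + e / 2 /\ s + e / 2 < s + e by split; lra.
  have dom := near_n _ (geometric_dominated C se_ge0 lt_se).
  apply: filterS2 dom upper_C => m dom_m upper_m.
  by rewrite nthroot_le ?u_ge0 ?(le_trans upper_m dom_m) //; lra.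
by apply: filterS2 lower_e upper_e => m lo up; rewrite distrC ler_distl lo up.
Qed.

Lemma nthroot_bigmax (I : finType) n (F : I -> R) : (0 < n)%N ->
  (forall i, 0 <= F i) ->
  \big[Num.max/0]_i nthroot n (F i) = nthroot n (\big[Num.max/0]_i F i).
Proof.
move=> n_gt0 F_ge0.
pose K (a b : R) := a = nthroot n b /\ 0 <= b.
suff [] : K (\big[Num.max/0]_i nthroot n (F i)) (\big[Num.max/0]_i F i) by [].
apply: (big_ind2 K); [by split; rewrite ?nthroot0 | | by move=> i _; split].
move=> a1 b1 a2 b2 [-> b1_ge0] [-> b2_ge0]; split; last by rewrite le_max b1_ge0.
have [le_b12|lt_b21] := leP b1 b2; first by apply: max_r; apply: ler_nthroot.
by apply: max_l; apply: ler_nthroot (ltW lt_b21).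
Qed.

End NthRoot.

Section WalkWeight.
Variables (R : realFieldType) (d : nat) (w : 'I_d -> 'I_d -> R).

Fixpoint walk_weight (x : 'I_d) (s : seq 'I_d) : R :=
  if s is y :: s' then w x y * walk_weight y s' else 1.

Lemma walk_weight_cat x s1 y s2 :
  walk_weight x (s1 ++ y :: s2) = walk_weight x (rcons s1 y) * walk_weight y s2.
Proof. by elim: s1 x => [|z s1 IH] x /=; rewrite ?mulr1 // IH mulrA. Qed.

Hypothesis w_ge0 : forall x y, 0 <= w x y.

Lemma walk_weight_ge0 x s : 0 <= walk_weight x s.
Proof. by elim: s x => [|y s IH] x /=; rewrite ?ler01 // mulr_ge0. Qed.

Variables (B tau : R).
Hypothesis w_le : forall x y, w x y <= B.
Hypothesis tau_gt0 : 0 < tau.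
Hypothesis cycle_le : forall x s, walk_weight x (rcons s x) <= tau ^+ (size s).+1.

Let M := Num.max 1 (B / tau).

(* Cutting out closed sub-walks, each costing at most [tau] per step, leaves a
   walk through pairwise distinct vertices, each step of which costs at most
   [B <= M * tau]. *)
Lemma walk_weight_le_undup x s :
  walk_weight x s <= M ^+ size (undup (x :: s)) * tau ^+ size s.
Proof.
have M_ge1 : 1 <= M by rewrite le_max lexx.
have M_gt0 : 0 < M := lt_le_trans ltr01 M_ge1.
have le_B : B <= M * tau by rewrite -ler_pdivrMr // le_max lexx orbT.
elim: {s}(size s) {-2}s x (leqnn (size s)) => [|n IH] s x.
  by rewrite leqn0 size_eq0 => /eqP->; rewrite /= expr1 expr0 mulr1.
have [/splitPr[s1 s2] s_le|x_notin s_le] := boolP (x \in s).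
  have size_s : size (s1 ++ x :: s2) = ((size s1).+1 + size s2)%N.
    by rewrite size_cat /= addnS.
  have s2_le : (size s2 <= n)%N by move: s_le; rewrite size_s; lia.
  have undup_le : (size (undup (x :: s2)) <= size (undup (x :: s1 ++ x :: s2)))%N.
    apply: uniq_leq_size; first exact: undup_uniq.
    by move=> u; rewrite !mem_undup !inE mem_cat !inE => /orP[]->; rewrite ?orbT.
  rewrite walk_weight_cat size_s exprD.
  apply: le_trans (ler_pM (walk_weight_ge0 _ _) (walk_weight_ge0 _ _) (cycle_le _ _)
    (IH s2 x s2_le)) _.
  rewrite mulrCA; apply: ler_wpM2r; first by rewrite mulr_ge0 ?exprn_ge0 ?ltW.
  exact: ler_weXn2l.
case: s x_notin s_le => [|y s] x_notin s_le; first by rewrite /= expr1 expr0 mulr1.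
rewrite [undup _]/= (negbTE x_notin) /= !exprS.
apply: le_trans (ler_pM (w_ge0 _ _) (walk_weight_ge0 _ _) (w_le x y) (IH s y s_le)) _.
apply: le_trans (_ : M * tau * (M ^+ size (undup (y :: s)) * tau ^+ size s) <= _).
  by apply: ler_wpM2r => //; rewrite mulr_ge0 ?exprn_ge0 ?ltW.
by rewrite mulrACA.
Qed.

Lemma walk_weight_le x s : walk_weight x s <= M ^+ d * tau ^+ size s.
Proof.
apply: le_trans (walk_weight_le_undup x s) _.
apply: ler_wpM2r; first by rewrite exprn_ge0 ?ltW.
apply: ler_weXn2l; first by rewrite le_max lexx.
rewrite -(card_uniqP (undup_uniq _)); apply: leq_trans (max_card _) _.
by rewrite card_ord.
Qed.

End WalkWeight.

Lemma bigmax_seq_attained (R : realDomainType) (T : eqType) (r : seq T) (f : T -> R) :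
  r != [::] -> (forall x, x \in r -> 0 <= f x) ->
  exists2 x, x \in r & \big[Num.max/0]_(y <- r) f y = f x.
Proof.
elim: r => [//|a [|b r] IH] _ f_ge0.
  by exists a; rewrite ?mem_head // big_cons big_nil max_l ?f_ge0 ?mem_head.
rewrite big_cons.
have [x xr ->] := IH isT (fun x xr => f_ge0 x (@mem_behead _ (a :: b :: r) x xr)).
have [le_ax|lt_xa] := leP (f a) (f x).
  by exists x => //; rewrite inE xr orbT.
by exists a; rewrite ?mem_head.
Qed.

Lemma sum_le_card_max (R : realDomainType) (d : nat) (f : 'I_d -> R) : (0 < d)%N ->
  exists l, \sum_i f i <= d%:R * f l.
Proof.
move=> d_gt0; have [l _ f_le] := @arg_maxP _ _ _ (Ordinal d_gt0) predT f isT.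
exists l; apply: le_trans (_ : \sum_(i < d) f l <= _).
  by apply: ler_sum => i _; apply: f_le.
by rewrite sumr_const card_ord mulr_natl.
Qed.

Lemma mx_norm_entry_ge (K : realDomainType) (m n : nat) (A : 'M[K]_(m, n)) i j :
  `|A i j| <= `|A|.
Proof.
rewrite [`|A|]mx_normrE.
exact: (le_bigmax _ (fun ij : 'I_m * 'I_n => `|A ij.1 ij.2|) (i, j)).
Qed.

Lemma mx_norm_le (K : realDomainType) (m n : nat) (A : 'M[K]_(m, n)) c :
  0 <= c -> (forall i j, `|A i j| <= c) -> `|A| <= c.
Proof. by move=> c_ge0 le_c; rewrite [`|A|]mx_normrE; apply: bigmax_le => // ij _. Qed.

Section JointProducts.
Variables (R : realType) (d : nat) (Sig : seq 'M[R]_d).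
Hypothesis Sig_ge0 : forall A, A \in Sig -> forall i j, 0 <= A i j.
Hypothesis Sig_neq0 : Sig != [::].

Lemma prods_ge0 n P : P \in prods Sig n -> forall i j, 0 <= P i j.
Proof.
elim: n P => [|n IH] P /=; first by rewrite inE => /eqP-> i j; rewrite mxE ler0n.
move=> /allpairsP[[A B] /= [SA PB ->]] i j; rewrite mxE.
by apply: sumr_ge0 => l _; apply: mulr_ge0; [apply: Sig_ge0 | apply: IH].
Qed.

Lemma prods_mul a b P Q : P \in prods Sig a -> Q \in prods Sig b ->
  P *m Q \in prods Sig (a + b).
Proof.
elim: a P => [|a IH] P /=; first by rewrite inE => /eqP-> PQ; rewrite mul1mx.
by move=> /allpairsP[[A B] /= [SA PB ->]] PQ; rewrite -mulmxA allpairs_f ?IH.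
Qed.

Lemma prods_addn_split a b P : P \in prods Sig (a + b) ->
  exists P1 P2, [/\ P1 \in prods Sig a, P2 \in prods Sig b & P = P1 *m P2].
Proof.
elim: a P => [|a IH] P /=; first by move=> PP; exists 1%:M, P; rewrite mul1mx mem_seq1.
move=> /allpairsP[[A B] /= [SA PB ->]].
have [P1 [P2 [PP1 PP2 ->]]] := IH _ PB.
by exists (A *m P1), P2; rewrite mulmxA allpairs_f.
Qed.

Lemma prods_neq0 n : prods Sig n != [::].
Proof.
have [A SA] : exists A, A \in Sig.
  by case: Sig Sig_neq0 => [//|A S] _; exists A; rewrite mem_head.
elim: n => [//|n IH] /=; have [P PP] : exists P, P \in prods Sig n.
  by case: (prods Sig n) IH => [//|P s] _; exists P; rewrite mem_head.
by apply/eqP => E; have := allpairs_f (fun A B => A *m B) SA PP; rewrite E.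
Qed.

Lemma le_jent n P i j : P \in prods Sig n -> P i j <= jent Sig n i j.
Proof. by move=> PP; rewrite (le_bigmax_seq _ _ _ _ PP). Qed.

Lemma jent_ge0 n i j : 0 <= jent Sig n i j.
Proof. exact: bigmax_ge_id. Qed.

Lemma jent_le n i j c : 0 <= c -> (forall P, P \in prods Sig n -> P i j <= c) ->
  jent Sig n i j <= c.
Proof. by move=> c_ge0 le_c; rewrite /jent big_seq; apply: bigmax_le. Qed.

Lemma jent_attained n i j : exists2 P, P \in prods Sig n & jent Sig n i j = P i j.
Proof.
apply: bigmax_seq_attained; first exact: prods_neq0.
by move=> P /prods_ge0; apply.
Qed.

Lemma jent0 i j : jent Sig 0 i j = (i == j)%:R.
Proof. by rewrite /jent big_cons big_nil mxE max_l // ler0n. Qed.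

Lemma jent_mul_le a b i l j :
  jent Sig a i l * jent Sig b l j <= jent Sig (a + b) i j.
Proof.
have [P PP ->] := jent_attained a i l; have [Q PQ ->] := jent_attained b l j.
apply: le_trans (le_jent _ _ (prods_mul PP PQ)); rewrite mxE (bigD1 l) //= lerDl.
by apply: sumr_ge0 => k _; rewrite mulr_ge0 ?(prods_ge0 PP) ?(prods_ge0 PQ).
Qed.

Lemma jent_addn_le a b i j :
  jent Sig (a + b) i j <= \sum_l jent Sig a i l * jent Sig b l j.
Proof.
apply: jent_le; first by apply: sumr_ge0 => l _; rewrite mulr_ge0 ?jent_ge0.
move=> P /prods_addn_split[P1 [P2 [PP1 PP2 ->]]]; rewrite mxE; apply: ler_sum => l _.
by rewrite ler_pM ?(prods_ge0 PP1) ?(prods_ge0 PP2) ?le_jent.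
Qed.

Lemma jent_diag_expn n i c : jent Sig n i i ^+ c <= jent Sig (c * n) i i.
Proof.
elim: c => [|c IH]; first by rewrite expr0 mul0n jent0 eqxx.
rewrite exprS mulSn; apply: le_trans (jent_mul_le _ _ _ _ _).
by apply: ler_wpM2l; rewrite ?jent_ge0.
Qed.

Lemma jent_le_jnorm n i j : jent Sig n i j <= jnorm Sig n.
Proof.
have [P PP ->] := jent_attained n i j.
apply: le_trans (ler_norm _) (le_trans (mx_norm_entry_ge P i j) _).
exact: (le_bigmax_seq _ _ _ _ PP).
Qed.

Lemma jnorm_ge0 n : 0 <= jnorm Sig n.
Proof. exact: bigmax_ge_id. Qed.

Lemma jnorm_le n c : 0 <= c -> (forall i j, jent Sig n i j <= c) -> jnorm Sig n <= c.
Proof.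
move=> c_ge0 le_c; rewrite /jnorm big_seq; apply: bigmax_le => // P PP.
apply: mx_norm_le => // i j.
by rewrite ger0_norm ?(prods_ge0 PP) // (le_trans (le_jent _ _ PP)).
Qed.

Lemma jent_le_jtr n i : jent Sig n i i <= jtr Sig n.
Proof.
have [P PP ->] := jent_attained n i i.
apply: le_trans (_ : \tr P <= _); last exact: (le_bigmax_seq _ _ _ _ PP).
rewrite /mxtrace (bigD1 i) //= lerDl.
by apply: sumr_ge0 => k _; apply: (prods_ge0 PP).
Qed.

Lemma jtr_ge0 n : 0 <= jtr Sig n.
Proof. exact: bigmax_ge_id. Qed.

Lemma jtr_le n c : 0 <= c -> (forall i, jent Sig n i i <= c) -> jtr Sig n <= d%:R * c.
Proof.
move=> c_ge0 le_c; rewrite /jtr big_seq; apply: bigmax_le => [|P PP].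
  by rewrite mulr_ge0 ?ler0n.
apply: le_trans (_ : \sum_(i < d) c <= _); last by rewrite sumr_const card_ord mulr_natl.
by apply: ler_sum => i _; apply: le_trans (le_jent _ _ PP) (le_c i).
Qed.

Lemma jent_le_expn_jnorm1 n i j : jent Sig n i j <= Num.max 1 (d%:R * jnorm Sig 1) ^+ n.
Proof.
set b := Num.max 1 _; have b_ge0 : 0 <= b by rewrite le_max ler01.
elim: n i j => [|n IH] i j; first by rewrite jent0 expr0; case: eqP.
rewrite -add1n; apply: le_trans (jent_addn_le _ _ _ _) _.
apply: le_trans (_ : \sum_(l < d) jnorm Sig 1 * b ^+ n <= _).
  by apply: ler_sum => l _; rewrite ler_pM ?jent_ge0 ?jent_le_jnorm.
rewrite sumr_const card_ord -mulr_natl mulrA exprS ler_wpM2r ?exprn_ge0 //.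
by rewrite le_max lexx orbT.
Qed.

Hypothesis d_gt0 : (0 < d)%N.

Definition diag_roots : set R :=
  [set x | exists i n, (0 < n)%N /\ x = nthroot n (jent Sig n i i)].

Definition diag_radius : R := sup diag_roots.

Lemma has_sup_diag_roots : has_sup diag_roots.
Proof.
split.
  by exists (nthroot 1 (jent Sig 1 (Ordinal d_gt0) (Ordinal d_gt0))), (Ordinal d_gt0), 1%N.
exists (Num.max 1 (d%:R * jnorm Sig 1)) => _ [i [n [n_gt0 ->]]].
by rewrite nthroot_le ?jent_ge0 ?jent_le_expn_jnorm1 // le_max ler01.
Qed.

Lemma diag_radius_ge0 : 0 <= diag_radius.
Proof.
apply: le_trans (nthroot_ge0 1 (jent Sig 1 (Ordinal d_gt0) (Ordinal d_gt0))) _.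
by apply: (sup_upper_bound has_sup_diag_roots); exists (Ordinal d_gt0), 1%N.
Qed.

Lemma jent_diag_le_radius n i : (0 < n)%N -> jent Sig n i i <= diag_radius ^+ n.
Proof.
move=> n_gt0; rewrite -nthroot_le ?jent_ge0 ?diag_radius_ge0 //.
by apply: (sup_upper_bound has_sup_diag_roots); exists i, n.
Qed.

Lemma jent_diag_le_expn n i t : (0 < n)%N -> diag_radius <= t ->
  jent Sig n i i <= t ^+ n.
Proof.
move=> n_gt0 le_t; apply: le_trans (jent_diag_le_radius i n_gt0) _.
by apply: lerXn2r; rewrite // nnegrE ?diag_radius_ge0 // (le_trans diag_radius_ge0).
Qed.

Lemma diag_radius_approx t : 0 <= t -> t < diag_radius ->
  exists i n, (0 < n)%N /\ t ^+ n < jent Sig n i i.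
Proof.
move=> t_ge0 lt_t; have gap_gt0 : 0 < diag_radius - t by rewrite subr_gt0.
have [_ [i [n [n_gt0 ->]]] lt_root] := sup_adherent gap_gt0 has_sup_diag_roots.
exists i, n; split=> //; rewrite ltNge -nthroot_le ?jent_ge0 // -ltNge.
by move: lt_root; rewrite /diag_radius; lra.
Qed.

Lemma walk_weight_le_jent r x s :
  walk_weight (jent Sig r) x s <= jent Sig (r * size s)%N x (last x s).
Proof.
elim: s x => [|y s IH] x /=; first by rewrite muln0 jent0 eqxx.
rewrite mulnS; apply: le_trans (jent_mul_le _ _ _ y _).
by apply: ler_wpM2l; rewrite ?jent_ge0 ?IH.
Qed.

(* Keep a dominant term of [jent_addn_le] at each of the [L] block boundaries. *)
Lemma jent_le_walk_weight r L i j : exists2 s, size s = L &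
  jent Sig (L * r)%N i j <= d%:R ^+ L * walk_weight (jent Sig r) i s.
Proof.
elim: L i j => [|L IH] i j.
  by exists [::] => //; rewrite mul0n jent0 expr0 mul1r; case: eqP.
have [l le_sum] := sum_le_card_max (fun l => jent Sig r i l * jent Sig (L * r) l j) d_gt0.
have [s size_s le_s] := IH l j.
exists (l :: s); first by rewrite /= size_s.
rewrite mulSn; apply: le_trans (jent_addn_le _ _ _ _) (le_trans le_sum _).
rewrite /= exprS -mulrA ler_wpM2l ?ler0n // mulrCA ler_wpM2l ?jent_ge0 //.
Qed.

Lemma jent_blocks_le t : diag_radius < t -> exists r M, (0 < r)%N /\
  forall L i j, jent Sig (L * r)%N i j <= M * t ^+ (L * r).
Proof.
move=> lt_t; set s := (diag_radius + t) / 2.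
have [s_gt_rad s_lt_t] : diag_radius < s /\ s < t by rewrite /s; split; lra.
have s_gt0 : 0 < s := le_lt_trans diag_radius_ge0 s_gt_rad.
have [N _ dom] := geometric_dominated d%:R (ltW s_gt0) s_lt_t.
set r := N.+1; have d_sr : d%:R * s ^+ r <= t ^+ r by apply: dom; rewrite /= leqnSn.
have cycle_le x q : walk_weight (jent Sig r) x (rcons q x) <= (s ^+ r) ^+ (size q).+1.
  apply: le_trans (walk_weight_le_jent _ _ _) _; rewrite last_rcons size_rcons -exprM.
  by apply: jent_diag_le_expn; rewrite ?muln_gt0 ?ltW.
have walk_le := walk_weight_le (jent_ge0 r) (jent_le_jnorm r) (exprn_gt0 r s_gt0) cycle_le.
exists r, (Num.max 1 (jnorm Sig r / s ^+ r) ^+ d); split=> // L i j.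
have [q size_q le_q] := jent_le_walk_weight r L i j.
apply: (le_trans le_q); apply: le_trans (ler_wpM2l (exprn_ge0 _ (ler0n _ _)) (walk_le i q)) _.
rewrite size_q mulrCA -exprMn mulnC exprM ler_wpM2l ?exprn_ge0 ?le_max ?ler01 //.
apply: lerXn2r d_sr; rewrite nnegrE ?exprn_ge0 //; last exact: ltW (lt_trans s_gt0 s_lt_t).
by rewrite mulr_ge0 ?ler0n ?exprn_ge0 ?ltW.
Qed.

Lemma jnorm_le_expn t : diag_radius < t -> exists C, forall n, jnorm Sig n <= C * t ^+ n.
Proof.
move=> lt_t; have t_gt0 : 0 < t := le_lt_trans diag_radius_ge0 lt_t.
have [r [M [r_gt0 blocks_le]]] := jent_blocks_le lt_t.
have M_ge0 : 0 <= M.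
  have := blocks_le 0%N (Ordinal d_gt0) (Ordinal d_gt0).
  by rewrite mul0n jent0 eqxx expr0 mulr1; apply: le_trans ler01.
set K := \sum_(q < r) jnorm Sig q.
have K_ge0 : 0 <= K by apply: sumr_ge0 => q _; apply: jnorm_ge0.
set mt := Num.min 1 t; have mt_gt0 : 0 < mt by rewrite lt_min ltr01 t_gt0.
have C_ge0 : 0 <= d%:R * M * K / mt ^+ r.
  apply: divr_ge0; last exact: exprn_ge0 (ltW mt_gt0).
  exact/mulr_ge0/K_ge0/mulr_ge0/M_ge0/ler0n.
exists (d%:R * M * K / mt ^+ r) => n.
apply: jnorm_le => [|i j]; first exact/mulr_ge0/exprn_ge0/ltW.
have mod_lt : (n %% r < r)%N by rewrite ltn_mod.
have le_mt : t ^+ (n %/ r * r) * mt ^+ r <= t ^+ (n %/ r * r + n %% r).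
  have [t_ge0 mt_ge0] := (ltW t_gt0, ltW mt_gt0).
  rewrite exprD; apply: ler_wpM2l; first exact: exprn_ge0.
  apply: le_trans (_ : mt ^+ (n %% r) <= _).
    by apply: ler_wiXn2l; rewrite ?ge_min ?lexx // ltnW.
  by apply: lerXn2r; rewrite ?nnegrE // ge_min lexx orbT.
rewrite (divn_eq n r); apply: le_trans (jent_addn_le _ _ _ _) _.
apply: le_trans (_ : \sum_(l < d) M * t ^+ (n %/ r * r) * K <= _).
  apply: ler_sum => l _; apply: ler_pM; rewrite ?jent_ge0 ?blocks_le //.
  apply: le_trans (jent_le_jnorm _ _ _) _.
  rewrite /K (bigD1 (Ordinal mod_lt)) //= lerDl.
  by apply: sumr_ge0 => q _; apply: jnorm_ge0.
rewrite sumr_const card_ord.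
have -> : M * t ^+ (n %/ r * r) * K *+ d =
    d%:R * M * K / mt ^+ r * (t ^+ (n %/ r * r) * mt ^+ r).
  by field; rewrite expf_neq0 ?gt_eqF.
by apply: ler_wpM2l.
Qed.

Lemma jent_addn_le_jnorm a b i j :
  jent Sig (a + b) i j <= d%:R * jnorm Sig a * jnorm Sig b.
Proof.
apply: le_trans (jent_addn_le _ _ _ _) _.
apply: le_trans (_ : \sum_(l < d) jnorm Sig a * jnorm Sig b <= _).
  by apply: ler_sum => l _; apply: ler_pM; rewrite ?jent_ge0 ?jent_le_jnorm.
by rewrite sumr_const card_ord -mulrA mulr_natl.
Qed.

(* Rounding [n] up to a multiple of [n0] costs at most a bounded factor. *)
Lemma jnorm_ge_expn t : 0 < t -> t < diag_radius ->
  exists2 c, 0 < c & forall n, c * t ^+ n <= jnorm Sig n.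
Proof.
move=> t_gt0 lt_t; have t_ge0 := ltW t_gt0.
have [i [n0 [n0_gt0 lt_jent]]] := diag_radius_approx t_ge0 lt_t.
set K := \big[Num.max/1]_(q < n0.+1) jnorm Sig q.
have K_gt0 : 0 < K := lt_le_trans ltr01 (bigmax_ge_id _ _ _ _).
set mt := Num.min 1 t; have mt_gt0 : 0 < mt by rewrite lt_min ltr01 t_gt0.
exists (mt ^+ n0 / (d%:R * K)); first by rewrite divr_gt0 ?exprn_gt0 ?mulr_gt0 ?ltr0n.
move=> n; set k := (n %/ n0).+1.
have n_lt : (n < k * n0)%N by rewrite ltn_ceil.
set r := (k * n0 - n)%N; have Ekn : (k * n0 = n + r)%N by rewrite subnKC // ltnW.
have r_le : (r <= n0)%N by rewrite leq_subLR /k mulSn addnC leq_add2r leq_divM.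
rewrite mulrAC ler_pdivrMr ?mulr_gt0 ?ltr0n //.
apply: le_trans (_ : t ^+ (k * n0) <= _).
  rewrite Ekn exprD mulrC ler_wpM2l ?exprn_ge0 //.
  apply: le_trans (_ : mt ^+ r <= _).
    by apply: ler_wiXn2l => //; [exact: ltW | rewrite ge_min lexx].
  by apply: lerXn2r; rewrite ?nnegrE ?ge_min ?lexx ?orbT //; apply: ltW.
apply: le_trans (_ : jent Sig (k * n0) i i <= _).
  apply: le_trans (jent_diag_expn _ _ _); rewrite mulnC exprM.
  by apply: lerXn2r; rewrite ?nnegrE ?exprn_ge0 ?jent_ge0 // ltW.
rewrite Ekn; apply: le_trans (jent_addn_le_jnorm _ _ _ _) _.
rewrite mulrCA -mulrA; apply: ler_wpM2l; first exact: ler0n.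
apply: ler_wpM2l; first exact: jnorm_ge0.
have r_lt : (r < n0.+1)%N by rewrite ltnS.
exact: (le_bigmax _ (fun q : 'I_n0.+1 => jnorm Sig q) (Ordinal r_lt)).
Qed.

Variable Delta : nat.
Hypothesis Delta_gt0 : (0 < Delta)%N.
Hypothesis delta_dvd : forall i g, is_delta Sig i g -> (g %| Delta)%N.

Lemma jent_diag_mulD_gt0 i n0 : (0 < n0)%N -> 0 < jent Sig n0 i i ->
  exists N, forall m, (N <= m)%N -> 0 < jent Sig (m * Delta) i i.
Proof.
move=> n0_gt0 jent_gt0.
apply: (@submonoid_mulD_eventually (fun n => 0 < jent Sig n i i)) n0_gt0 jent_gt0 Delta_gt0 _.
- by rewrite jent0 eqxx ltr01.
- by move=> a b ? ?; apply: lt_le_trans (jent_mul_le a b i i i); apply: mulr_gt0.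
- exact: delta_dvd.
Qed.

(* Write [m Delta = (k Delta) n0 + (N + j) Delta] with [j < n0]: the first part
   is controlled by powers of the entry beating [t ^+ n0], the second by
   finitely many positive entries. *)
Lemma jent_diag_ge_expn t : 0 < t -> t < diag_radius -> exists i, exists2 c, 0 < c &
  \forall m \near \oo, c * t ^+ (m * Delta) <= jent Sig (m * Delta) i i.
Proof.
move=> t_gt0 lt_t; have t_ge0 := ltW t_gt0.
have [i [n0 [n0_gt0 lt_jent]]] := diag_radius_approx t_ge0 lt_t.
have [N jent_mulD_gt0] :=
  jent_diag_mulD_gt0 n0_gt0 (le_lt_trans (exprn_ge0 _ t_ge0) lt_jent).
pose c := \big[Num.min/1]_(j < n0)
  (jent Sig ((N + j) * Delta) i i / t ^+ ((N + j) * Delta)).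
have c_gt0 : 0 < c.
  by apply: lt_bigmin => // j _; rewrite divr_gt0 ?exprn_gt0 ?jent_mulD_gt0 ?leq_addr.
exists i, c => //; exists N => // m /= le_Nm.
set k := ((m - N) %/ n0)%N; set j := Ordinal (ltn_pmod (m - N) n0_gt0).
have -> : (m * Delta = k * Delta * n0 + (N + j) * Delta)%N.
  by rewrite -(subnK le_Nm) (divn_eq (m - N) n0) /=; ring.
rewrite exprD mulrCA; apply: le_trans (jent_mul_le _ _ _ i _).
apply: ler_pM; [exact: exprn_ge0 | exact: mulr_ge0 (ltW c_gt0) (exprn_ge0 _ t_ge0) | |].
  apply: le_trans (jent_diag_expn _ _ _); rewrite mulnC exprM.
  by apply: lerXn2r; rewrite ?nnegrE ?exprn_ge0 ?jent_ge0 // ltW.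
rewrite -ler_pdivlMr ?exprn_gt0 //.
by rewrite /c; exact: bigmin_le.
Qed.

Lemma cvg_nthroot_jnorm :
  nthroot n.+1 (jnorm Sig n.+1) @[n --> \oo] --> diag_radius.
Proof.
apply: (@nthroot_cvg _ (fun n => jnorm Sig n.+1) succn) => //.
- by move=> n; apply: jnorm_ge0.
- exact: diag_radius_ge0.
- by move=> t /jnorm_le_expn[C le_C]; exists C; apply: nearW => n.
- by move=> t t_gt0 /(jnorm_ge_expn t_gt0)[c c_gt0 ge_c]; exists c => //; apply: nearW => n.
Qed.

Let mulD_gt0 m : (0 < m.+1 * Delta)%N.
Proof. by rewrite muln_gt0. Qed.
Let mulD_ge m : (m <= m.+1 * Delta)%N.
Proof. by rewrite (leq_trans (leqnSn m)) // leq_pmulr. Qed.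

Lemma cvg_bigmax_nthroot_jent_diag :
  \big[Num.max/0]_(i < d) nthroot (m.+1 * Delta) (jent Sig (m.+1 * Delta) i i)
    @[m --> \oo] --> diag_radius.
Proof.
have -> : (fun m =>
      \big[Num.max/0]_(i < d) nthroot (m.+1 * Delta) (jent Sig (m.+1 * Delta) i i)) =
    (fun m => nthroot (m.+1 * Delta) (\big[Num.max/0]_(i < d) jent Sig (m.+1 * Delta) i i)).
  by apply: funext => m; rewrite nthroot_bigmax ?mulD_gt0 // => i; apply: jent_ge0.
apply: nthroot_cvg mulD_gt0 mulD_ge _ diag_radius_ge0 _ _.
- by move=> m; apply: bigmax_ge_id.
- move=> t lt_t; exists 1; apply: nearW => m; rewrite mul1r.
  have t_ge0 := le_trans diag_radius_ge0 (ltW lt_t).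
  apply: bigmax_le => [|i _]; first exact: exprn_ge0.
  exact: jent_diag_le_expn (mulD_gt0 m) (ltW lt_t).
- move=> t t_gt0 lt_t; have [i [c c_gt0 [N _ ge_c]]] := jent_diag_ge_expn t_gt0 lt_t.
  exists c => //; exists N => // m /= /leqW /ge_c /le_trans; apply.
  exact: (le_bigmax _ (fun i => jent Sig (m.+1 * Delta) i i)).
Qed.

Lemma cvg_nthroot_jtr :
  nthroot (m.+1 * Delta) (jtr Sig (m.+1 * Delta)) @[m --> \oo] --> diag_radius.
Proof.
apply: nthroot_cvg mulD_gt0 mulD_ge _ diag_radius_ge0 _ _.
- by move=> m; apply: jtr_ge0.
- move=> t lt_t; exists d%:R; apply: nearW => m.
  have t_ge0 := le_trans diag_radius_ge0 (ltW lt_t).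
  apply: jtr_le => [|i]; first exact: exprn_ge0.
  exact: jent_diag_le_expn (mulD_gt0 m) (ltW lt_t).
- move=> t t_gt0 lt_t; have [i [c c_gt0 [N _ ge_c]]] := jent_diag_ge_expn t_gt0 lt_t.
  exists c => //; exists N => // m /= /leqW /ge_c /le_trans; apply.
  exact: jent_le_jtr.
Qed.

End JointProducts.

Theorem proposition2 (R : realType) (d : nat) (Sig : seq 'M[R]_d)
  (Delta : nat) :
  (0 < d)%N ->
  Sig != [::] ->
  (forall A, A \in Sig -> forall i j, 0 <= A i j) ->
  (0 < Delta)%N ->
  (forall i g, is_delta Sig i g -> (g %| Delta)%N) ->
  ((fun m : nat =>
      \big[Num.max/0]_(i < d)
        (jent Sig (m.+1 * Delta) i i `^ ((m.+1 * Delta)%:R)^-1))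
     @ \oo --> jsr Sig) /\
  ((fun m : nat =>
      jtr Sig (m.+1 * Delta) `^ ((m.+1 * Delta)%:R)^-1)
     @ \oo --> jsr Sig).
Proof.
move=> d_gt0 Sig_neq0 Sig_ge0 Delta_gt0 delta_dvd.
have -> : jsr Sig = diag_radius Sig.
  exact: cvg_lim (cvg_nthroot_jnorm Sig_ge0 Sig_neq0 d_gt0).
split; first exact (cvg_bigmax_nthroot_jent_diag Sig_ge0 Sig_neq0 d_gt0 Delta_gt0 delta_dvd).
exact (cvg_nthroot_jtr Sig_ge0 Sig_neq0 d_gt0 Delta_gt0 delta_dvd).
Qed.
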